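(* Let $N\ge 1$, let $f:Z[1,N]\times\mathbb{R}\to\mathbb{R}$ be continuous in its second variable for every $k\in Z[1,N]$, and let $p:Z[1,N+2]\to\mathbb{R}$, $q:Z[1,N+1]\to\mathbb{R}$. Assume that (1) there exists $m>0$ such that $s f(k,s)\ge 0$ for all $|s|\ge m$ and $k\in Z[1,N]$; (2) $\eta'(p)\,p_{\min}-\eta(q)\,q_{\max}>0$; that $s\mapsto f(k,s)$ is non-decreasing for every $k\in Z[1,N]$, and that $p_{\min}\eta'(p)>q_{\max}\eta(q)$. Then the boundary value problem $$\Delta^2\big(p(k)\Delta^2 y(k-2)\big)+\Delta\big(q(k)\Delta y(k-1)\big)+f(k,y(k))=0\ \ (k\in Z[1,N]),\qquad y(-1)=y(0)=y(N+1)=y(N+2)=0$$ has exactly one solution.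
   Context: $Z[a,b]=[a,b]\cap\mathbb{Z}$; $\Delta x(k)=x(k+1)-x(k)$, $\Delta^2=\Delta\circ\Delta$; $\Delta^2(p(k)\Delta^2y(k-2))$ means $\Delta^2$ applied to $k\mapsto p(k)\Delta^2 y(k-2)$, similarly for $\Delta(q(k)\Delta y(k-1))$. A solution is a function $y:Z[-1,N+2]\to\mathbb{R}$ satisfying the equation and boundary conditions. $p_{\min}=\min_{Z[1,N+2]}p$, $q_{\max}=\max_{Z[1,N+1]}q$. Let $E=\{y:Z[-1,N+2]\to\mathbb{R}\mid y(-1)=y(0)=y(N+1)=y(N+2)=0\}$ and $\tilde y=(y(1),\dots,y(N))^T$; let $V$ be the $(N+1)\times N$ matrix with $V\tilde y=(\Delta y(0),\dots,\Delta y(N))^T$ and $W$ the $(N+2)\times N$ matrix with $W\tilde y=(\Delta^2y(-1),\dots,\Delta^2y(N))^T$ for $y\in E$; $\lambda_1$, $\lambda_2$ are the smallest eigenvalues of $V^TV$ and $W^TW$. Define $\eta'(p)=\lambda_2$ if $p_{\min}\ge 0$ and $\eta'(p)=16$ if $p_{\min}<0$; $\eta(q)=\lambda_1$ if $q_{\max}<0$ and $\eta(q)=4$ if $q_{\max}\ge 0$. *)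

From HB Require Import structures.
From mathcomp Require Import all_boot all_order all_algebra.
From mathcomp Require Import all_classical all_reals topology normedtype.
Set Implicit Arguments. Unset Strict Implicit. Unset Printing Implicit Defensive.
Import Order.TTheory GRing.Theory Num.Theory.
Import numFieldNormedType.Exports.
Local Open Scope ring_scope.

Section Defs.
Variable R : realType.

Definition fdiff (x : int -> R) : int -> R := fun k => x (k + 1) - x k.

Definition pmin (N : nat) (p : int -> R) : R :=
  \big[Num.min/p 1]_(i < N.+2) p (i.+1)%:Z.
Definition qmax (N : nat) (q : int -> R) : R :=
  \big[Num.max/q 1]_(i < N.+1) q (i.+1)%:Z.

(* V : (N+1) x N with V ytilde = (Delta y(0), ..., Delta y(N)) for y in E,
   where ytilde_i = y(i+1) (i < N). *)
Definition Vmx (N : nat) : 'M[R]_(N.+1, N) :=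
  \matrix_(j < N.+1, i < N) ((j == i :> nat)%:R - (j == i.+1 :> nat)%:R).

(* W : (N+2) x N with W ytilde = (Delta^2 y(-1), ..., Delta^2 y(N)) for y in E. *)
Definition Wmx (N : nat) : 'M[R]_(N.+2, N) :=
  \matrix_(j < N.+2, i < N)
    ((j == i :> nat)%:R - 2 * (j == i.+1 :> nat)%:R + (j == i.+2 :> nat)%:R).

Definition smallest_eigenvalue (n : nat) (A : 'M[R]_n) (l : R) : Prop :=
  eigenvalue A l /\ forall a, eigenvalue A a -> l <= a.

Definition etap (N : nat) (lam2 : R) (p : int -> R) : R :=
  if 0 <= pmin N p then lam2 else 16.
Definition etaq (N : nat) (lam1 : R) (q : int -> R) : R :=
  if qmax N q < 0 then lam1 else 4.

(* y : Z -> R is a solution of the BVP (only its values on Z[-1,N+2] matter) *)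
Definition is_solution (N : nat) (p q : int -> R) (f : int -> R -> R)
    (y : int -> R) : Prop :=
  (forall k : int, 1 <= k <= N%:Z ->
     fdiff (fdiff (fun j => p j * fdiff (fdiff y) (j - 2))) k
     + fdiff (fun j => q j * fdiff y (j - 1)) k + f k (y k) = 0)
  /\ y (-1) = 0 /\ y 0 = 0 /\ y (N.+1)%:Z = 0 /\ y (N.+2)%:Z = 0.

End Defs.

From HB Require Import structures.
From mathcomp Require Import all_boot all_order all_algebra.
From mathcomp Require Import all_classical all_reals all_analysis.
From mathcomp Require Import ring lra zify.
Set Implicit Arguments. Unset Strict Implicit. Unset Printing Implicit Defensive.
Import Order.TTheory GRing.Theory Num.Theory.
Import numFieldNormedType.Exports.
Local Open Scope classical_set_scope.
Local Open Scope ring_scope.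

(* Multiplying the equation by a test function z that vanishes at -1, 0, N+1,
   N+2 and summing by parts turns the operator into the symmetric form
   E(y, z) = sum p D2y D2z - sum q D1y D1z.  Rayleigh's inequality for V^T V
   and W^T W (or, when p_min < 0 resp. q_max >= 0, the crude bounds
   |D2 z|^2 <= 16 |z|^2 and |D1 z|^2 <= 4 |z|^2) gives E(z, z) >= c |z|^2 with
   c = eta'(p) p_min - eta(q) q_max > 0.  Uniqueness: test the difference of two
   solutions against itself; monotonicity of f makes the nonlinear term
   nonnegative.  Existence: solutions are the critical points of
   J(v) = E(v, v)/2 + sum_k F_k(v_k) with F_k a primitive of f(k, .).  As
   F_k(s) - F_k(0) >= f(k, 0) s, the nonlinear part decreases at most
   linearly, so coercivity pushes a minimiser of J on a large ball into its
   interior, where the Euler-Lagrange equation is the boundary value problem. *)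

Definition sqnorm {R : realType} n (u : 'rV[R]_n) := \sum_i u ord0 i ^+ 2.

Definition bilform {R : realType} n (A : 'M[R]_n) (u w : 'rV[R]_n) :=
  \sum_i \sum_j u ord0 i * A i j * w ord0 j.

Notation qform A u := (bilform A u u).

Section Rayleigh.
Variable R : realType.

Lemma sqnorm_ge0 n (u : 'rV[R]_n) : 0 <= sqnorm u.
Proof. by apply: sumr_ge0 => i _; rewrite sqr_ge0. Qed.

Lemma sqnorm_eq0 n (u : 'rV[R]_n) : sqnorm u = 0 -> u = 0.
Proof.
move=> u0; apply/rowP => i; rewrite mxE.
have /eqP := @psumr_eq0P _ _ predT (fun j => u ord0 j ^+ 2) (fun j _ => sqr_ge0 _) u0 i isT.
by rewrite sqrf_eq0 => /eqP.
Qed.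

Lemma bilformE n (A : 'M[R]_n) u w :
  bilform A u w = \sum_j (u *m A) ord0 j * w ord0 j.
Proof.
rewrite /bilform exchange_big; apply: eq_bigr => j _.
by rewrite !mxE mulr_suml.
Qed.

Lemma bilform_scalar_mx n (a : R) (u : 'rV[R]_n) : qform a%:M u = a * sqnorm u.
Proof.
rewrite bilformE /sqnorm mulr_sumr; apply: eq_bigr => j _.
by rewrite mul_mx_scalar !mxE expr2 mulrA mulrC.
Qed.

Lemma bilformBl n (A B : 'M[R]_n) u w :
  bilform (A - B) u w = bilform A u w - bilform B u w.
Proof.
rewrite /bilform -sumrB; apply: eq_bigr => i _; rewrite -sumrB.
by apply: eq_bigr => j _; rewrite !mxE; ring.
Qed.

Lemma bilformC n (A : 'M[R]_n) u w : A^T = A -> bilform A u w = bilform A w u.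
Proof.
move=> As; rewrite /bilform exchange_big; apply: eq_bigr => i _.
apply: eq_bigr => j _; have -> : A j i = A i j by rewrite -{1}As mxE.
ring.
Qed.

Lemma qformZ n (A : 'M[R]_n) t u : qform A (t *: u) = t ^+ 2 * qform A u.
Proof.
rewrite /bilform mulr_sumr; apply: eq_bigr => i _; rewrite mulr_sumr.
by apply: eq_bigr => j _; rewrite !mxE; ring.
Qed.

Lemma qformDZ n (A : 'M[R]_n) t u w : A^T = A ->
  qform A (u + t *: w) = qform A u + 2 * t * bilform A u w + t ^+ 2 * qform A w.
Proof.
move=> As.
have -> : 2 * t * bilform A u w = t * bilform A u w + t * bilform A w u.
  by rewrite (bilformC _ _ As); ring.
rewrite /bilform !mulr_sumr -!big_split /=; apply: eq_bigr => i _.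
rewrite !mulr_sumr -!big_split; apply: eq_bigr => j _; rewrite !mxE /=; ring.
Qed.

Lemma continuous_qform n (A : 'M[R]_n) : continuous (fun u => qform A u).
Proof.
rewrite /bilform.
apply: (@continuous_big _ _ +%R 0 predT add_continuous) => i _.
apply: (@continuous_big _ _ +%R 0 predT add_continuous) => j _ u.
exact: (continuousM (continuousM (@coord_continuous R 1 n ord0 i u)
  (@cst_continuous _ _ (A i j) u)) (@coord_continuous R 1 n ord0 j u)).
Qed.

Lemma continuous_sqnorm n : continuous (@sqnorm R n).
Proof.
apply: (@continuous_big _ _ +%R 0 predT add_continuous) => i _ u.
exact: continuousM (@coord_continuous R 1 n ord0 i u) (@coord_continuous R 1 n ord0 i u).
Qed.

Lemma linear_coef_eq0 (a b : R) :
  (forall t, 0 <= 2 * t * a + t ^+ 2 * b) -> a = 0.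
Proof.
move=> H; have b0 : 0 <= b by have := H 1; have := H (-1); lra.
have b1 : 0 < b + 1 by lra.
have := H (- a / (b + 1)).
have -> : 2 * (- a / (b + 1)) * a + (- a / (b + 1)) ^+ 2 * b
          = - (a ^+ 2 * (b + 2)) / (b + 1) ^+ 2 by field; rewrite gt_eqF.
rewrite pmulr_lge0 ?invr_gt0 ?exprn_gt0 // oppr_ge0 pmulr_lle0; last lra.
by rewrite le_eqVlt ltNge sqr_ge0 orbF sqrf_eq0 => /eqP.
Qed.

Lemma psd_qform_eq0 n (A : 'M[R]_n) u : A^T = A ->
  (forall w, 0 <= qform A w) -> qform A u = 0 -> u *m A = 0.
Proof.
move=> As psd u0.
have lin0 w : bilform A u w = 0.
  apply: (@linear_coef_eq0 _ (qform A w)) => t.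
  by have := psd (u + t *: w); rewrite qformDZ // u0 add0r.
apply: sqnorm_eq0; rewrite -[RHS](lin0 (u *m A)) bilformE.
by apply: eq_bigr => j _; rewrite expr2.
Qed.

Lemma qform_min_sphere n (A : 'M[R]_n.+1) :
  exists2 u, sqnorm u = 1 & forall w, qform A u * sqnorm w <= qform A w.
Proof.
pose S := [set v : 'rV[R]_n.+1 | sqnorm v = 1].
have S0 : S !=set0.
  exists (delta_mx 0 0); rewrite /S /= /sqnorm (bigD1 ord0) //= big1 ?mxE /=.
    by rewrite expr1n addr0.
  by move=> i /negbTE ni; rewrite mxE ni /= ?andbF expr0n.
have Sc : compact S.
  apply: bounded_closed_compact.
    exists 1; split => // M M1 v /= Sv.
    rewrite [X in X <= _]/Num.norm /= mx_normrE.
    apply: bigmax_le => [|[i j] _ /=]; first lra.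
    have : v ord0 j ^+ 2 <= 1.
      rewrite -Sv /sqnorm (bigD1 j) //= lerDl.
      by apply: sumr_ge0 => k _; exact: sqr_ge0.
    rewrite (ord1 i) ler_norml; move=> h; apply/andP; split; nra.
  exact: (preimage_closed (fun x _ => @continuous_sqnorm n.+1 x) (@closed_eq _ 1)).
have [u uS umin] :=
  EVT_min_rV S0 Sc (continuous_subspaceT (@continuous_qform _ A)).
have u1 : sqnorm u = 1 by move: uS; rewrite inE.
exists u => // w; have [/sqnorm_eq0 ->|w0] := eqVneq (sqnorm w) 0.
  rewrite -[X in _ <= qform A X](scale0r 0) qformZ expr2 !mul0r.
  by rewrite /sqnorm big1 ?mulr0 // => i _; rewrite mxE expr2 mul0r.
have wp : 0 < sqnorm w by rewrite lt_def w0 sqnorm_ge0.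
have s2 : Num.sqrt (sqnorm w) ^+ 2 = sqnorm w by rewrite sqr_sqrtr // ltW.
have sw0 : Num.sqrt (sqnorm w) != 0 by rewrite gt_eqF ?sqrtr_gt0.
have := umin ((Num.sqrt (sqnorm w))^-1 *: w).
rewrite inE /S /= -(mul1r (sqnorm _)) -bilform_scalar_mx qformZ.
rewrite bilform_scalar_mx mul1r exprVn s2 mulVf ?gt_eqF // => /(_ erefl).
by rewrite qformZ exprVn s2 ler_pdivlMl // mulrC.
Qed.

Lemma sphere_min_eigenvalue n (A : 'M[R]_n) u : A^T = A -> sqnorm u = 1 ->
  (forall w, qform A u * sqnorm w <= qform A w) -> eigenvalue A (qform A u).
Proof.
move=> As u1 umin; set m := qform A u.
have Bs : (A - m%:M)^T = A - m%:M by rewrite linearB /= As tr_scalar_mx.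
have psd w : 0 <= qform (A - m%:M) w.
  by rewrite bilformBl bilform_scalar_mx subr_ge0.
have q0 : qform (A - m%:M) u = 0.
  by rewrite bilformBl bilform_scalar_mx u1 mulr1 subrr.
have := psd_qform_eq0 Bs psd q0.
rewrite mulmxBr mul_mx_scalar => /eqP; rewrite subr_eq0 => /eqP uA.
apply/eigenvalueP; exists u => //; apply/eqP => u0.
move: u1; rewrite u0 /sqnorm big1 => [/eqP|i _]; first by rewrite eq_sym oner_eq0.
by rewrite mxE expr2 mul0r.
Qed.

Lemma rayleigh n (A : 'M[R]_n) lam : A^T = A -> smallest_eigenvalue A lam ->
  forall u, lam * sqnorm u <= qform A u.
Proof.
case: n A => [|n] A As [_ lam_min] u.
  by rewrite /sqnorm /bilform !big_ord0 mulr0.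
have [u0 u01 u0min] := qform_min_sphere A.
have lam_le := lam_min _ (sphere_min_eigenvalue As u01 u0min).
exact: le_trans (ler_wpM2r (sqnorm_ge0 u) lam_le) (u0min u).
Qed.

End Rayleigh.

Lemma PoszS (i : nat) : i%:Z + 1 = (i.+1)%:Z.
Proof. lia. Qed.

Lemma PoszSB1 (i : nat) : (i.+1)%:Z - 1 = i%:Z.
Proof. lia. Qed.

Section Energy.
Variable R : realType.

Lemma sum_by_parts (n : nat) (w G : int -> R) :
  \sum_(i < n) w (i.+1)%:Z * fdiff G (i.+1)%:Z =
  w n%:Z * G (n.+1)%:Z - w 0 * G 1
  - \sum_(i < n) G (i.+1)%:Z * (w (i.+1)%:Z - w i%:Z).
Proof.
elim: n => [|n IH]; first by rewrite !big_ord0; ring.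
by rewrite !big_ord_recr /= IH /fdiff PoszS; ring.
Qed.

Lemma sum_by_parts0 (n : nat) (w G : int -> R) : w 0 = 0 -> w (n.+1)%:Z = 0 ->
  \sum_(i < n) w (i.+1)%:Z * fdiff G (i.+1)%:Z =
  - \sum_(i < n.+1) G (i.+1)%:Z * (w (i.+1)%:Z - w i%:Z).
Proof. by move=> w0 wn; rewrite sum_by_parts big_ord_recr /= w0 wn; ring. Qed.

Variables (N : nat) (p q : int -> R).

Definition d1 (y : int -> R) (j : int) := fdiff y (j - 1).
Definition d2 (y : int -> R) (j : int) := fdiff (fdiff y) (j - 2).

Definition bvp_op (y : int -> R) (k : int) :=
  fdiff (fdiff (fun j => p j * d2 y j)) k + fdiff (fun j => q j * d1 y j) k.

Definition energy_form (y z : int -> R) :=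
  \sum_(i < N.+2) p (i.+1)%:Z * d2 y (i.+1)%:Z * d2 z (i.+1)%:Z
  - \sum_(i < N.+1) q (i.+1)%:Z * d1 y (i.+1)%:Z * d1 z (i.+1)%:Z.

Definition boundary0 (z : int -> R) :=
  z (-1) = 0 /\ z 0 = 0 /\ z (N.+1)%:Z = 0 /\ z (N.+2)%:Z = 0.

Lemma d1E (z : int -> R) (i : nat) : d1 z (i.+1)%:Z = z (i.+1)%:Z - z i%:Z.
Proof. by rewrite /d1 /fdiff PoszSB1 PoszS. Qed.

Lemma d2E (z : int -> R) (i : nat) :
  d2 z (i.+1)%:Z = (z (i.+1)%:Z - z i%:Z) - (z i%:Z - z (i%:Z - 1)).
Proof.
rewrite /d2 /fdiff.
have -> : (i.+1)%:Z - 2 + 1 + 1 = (i.+1)%:Z by lia.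
have -> : (i.+1)%:Z - 2 + 1 = i%:Z by lia.
by have -> : (i.+1)%:Z - 2 = i%:Z - 1 by lia.
Qed.

(* Two summations by parts for the fourth-order term, one for the
   second-order term. *)
Lemma bvp_op_energy (y z : int -> R) : boundary0 z ->
  \sum_(i < N) z (i.+1)%:Z * bvp_op y (i.+1)%:Z = energy_form y z.
Proof.
move=> [zm1 [z0 [zN1 zN2]]].
rewrite /bvp_op /energy_form.
under eq_bigr do rewrite mulrDr.
rewrite big_split /= !(sum_by_parts0 _ z0 zN1).
set G := fun j => p j * d2 y j.
pose dz (j : int) := z j - z (j - 1).
have -> : \sum_(i < N.+1) fdiff G (i.+1)%:Z * (z (i.+1)%:Z - z i%:Z)
        = \sum_(i < N.+1) dz (i.+1)%:Z * fdiff G (i.+1)%:Z.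
  by apply: eq_bigr => i _; rewrite /dz PoszSB1 mulrC.
rewrite (@sum_by_parts0 N.+1 dz G); last 2 first.
- by rewrite /dz sub0r z0 zm1 subrr.
- by rewrite /dz PoszSB1 zN2 zN1 subrr.
rewrite opprK; congr (_ - _).
  apply: eq_bigr => i _; rewrite /G /dz PoszSB1 (d2E z); ring.
by apply: eq_bigr => i _; rewrite /= (d1E z); ring.
Qed.

Lemma bvp_opB (y z : int -> R) k :
  bvp_op (fun j => y j - z j) k = bvp_op y k - bvp_op z k.
Proof. rewrite /bvp_op /d1 /d2 /fdiff; ring. Qed.

Lemma energy_formZr (y z : int -> R) (a : R) :
  energy_form y (fun k => a * z k) = a * energy_form y z.
Proof.
rewrite /energy_form mulrBr !mulr_sumr.
by congr (_ - _); apply: eq_bigr => i _; rewrite /d1 /d2 /fdiff; ring.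
Qed.

Lemma energy_formDZ (y z : int -> R) (t : R) :
  energy_form (fun k => y k + t * z k) (fun k => y k + t * z k)
  = energy_form y y + 2 * t * energy_form y z + t ^+ 2 * energy_form z z.
Proof.
rewrite /energy_form !mulrBr !mulr_sumr.
have sumDZ n (F : 'I_n -> R) G H L :
    (forall i, F i = G i + 2 * t * H i + t ^+ 2 * L i) ->
    \sum_i F i = \sum_i G i + \sum_i 2 * t * H i + \sum_i t ^+ 2 * L i.
  by move=> e; rewrite -!big_split; apply: eq_bigr => i _; rewrite e.
rewrite (sumDZ _ _ (fun i : 'I_N.+2 => p (i.+1)%:Z * d2 y (i.+1)%:Z * d2 y (i.+1)%:Z)
  (fun i => p (i.+1)%:Z * d2 y (i.+1)%:Z * d2 z (i.+1)%:Z)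
  (fun i => p (i.+1)%:Z * d2 z (i.+1)%:Z * d2 z (i.+1)%:Z)); last first.
  by move=> i; rewrite /d2 /fdiff; ring.
rewrite (sumDZ _ _ (fun i : 'I_N.+1 => q (i.+1)%:Z * d1 y (i.+1)%:Z * d1 y (i.+1)%:Z)
  (fun i => q (i.+1)%:Z * d1 y (i.+1)%:Z * d1 z (i.+1)%:Z)
  (fun i => q (i.+1)%:Z * d1 z (i.+1)%:Z * d1 z (i.+1)%:Z)); last first.
  by move=> i; rewrite /d1 /fdiff; ring.
ring.
Qed.

End Energy.

Section Coercivity.
Variable R : realType.

Lemma sum_delta_shift (n d k : nat) (g : nat -> R) :
  \sum_(i < n) (k == d + i)%N%:R * g i = if (d <= k < d + n)%N then g (k - d)%N else 0.
Proof.
case: ifP => kdn.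
  have kd : (k - d < n)%N by lia.
  rewrite (bigD1 (Ordinal kd)) //= subnKC ?eqxx ?mul1r; last lia.
  rewrite big1 ?addr0 // => i /eqP ni.
  have /negbTE -> : (k != d + i)%N by apply/eqP => ki; apply: ni; apply: val_inj => /=; lia.
  by rewrite mul0r.
rewrite big1 // => i _.
have /negbTE -> : (k != d + i)%N by apply/eqP => ki; move: kdn (ltn_ord i); rewrite ki; lia.
by rewrite mul0r.
Qed.

Lemma qform_mulmx_tr m n (M : 'M[R]_(m, n)) (u : 'rV[R]_n) :
  qform (M^T *m M) u = \sum_k (\sum_i M k i * u ord0 i) ^+ 2.
Proof.
rewrite /bilform.
transitivity (\sum_i \sum_j \sum_k u ord0 i * M k i * (M k j * u ord0 j)).
  apply: eq_bigr => i _; apply: eq_bigr => j _.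
  rewrite !mxE mulr_sumr mulr_suml; apply: eq_bigr => k _; rewrite !mxE; ring.
rewrite exchange_big /=.
transitivity (\sum_j \sum_k \sum_i u ord0 i * M k i * (M k j * u ord0 j)).
  by apply: eq_bigr => j _; rewrite exchange_big.
rewrite exchange_big /=; apply: eq_bigr => k _.
rewrite expr2 mulr_suml exchange_big /=; apply: eq_bigr => i _.
by rewrite mulr_sumr; apply: eq_bigr => j _; ring.
Qed.

Variable N : nat.

Definition inner_row (z : int -> R) : 'rV[R]_N := \row_(i < N) z (i.+1)%:Z.

Lemma sqnorm_inner_row (z : int -> R) :
  sqnorm (inner_row z) = \sum_(i < N) z (i.+1)%:Z ^+ 2.
Proof. by apply: eq_bigr => i _; rewrite mxE. Qed.

Lemma Wmx_inner_row (z : int -> R) : boundary0 N z -> forall k : 'I_N.+2,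
  \sum_i Wmx R N k i * inner_row z ord0 i = d2 z (k.+1)%:Z.
Proof.
move=> [zm1 [z0 [zN1 zN2]]] k; have := ltn_ord k; rewrite d2E.
under eq_bigr do rewrite !mxE mulrDl mulrBl -mulrA.
rewrite big_split sumrB /= -mulr_sumr.
rewrite (sum_delta_shift N 0 k (fun i => z (i.+1)%:Z))
  (sum_delta_shift N 1 k (fun i => z (i.+1)%:Z))
  (sum_delta_shift N 2 k (fun i => z (i.+1)%:Z)) => kN.
have -> : (if (0 <= k < 0 + N)%N then z ((k - 0).+1)%:Z else 0) = z (k.+1)%:Z.
  case: ifP => h; first by rewrite subn0.
  by have [->|->] : k = N :> nat \/ k = N.+1 :> nat by lia.
have -> : (if (1 <= k < 1 + N)%N then z ((k - 1).+1)%:Z else 0) = z k%:Z.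
  case: ifP => h; first by congr (z _); lia.
  by have [->|->] : k = 0 :> nat \/ k = N.+1 :> nat by lia.
have -> : (if (2 <= k < 2 + N)%N then z ((k - 2).+1)%:Z else 0) = z (k%:Z - 1).
  case: ifP => h; first by congr (z _); lia.
  by have [->|->] : k = 0 :> nat \/ k = 1 :> nat by lia.
ring.
Qed.

Lemma Vmx_inner_row (z : int -> R) : boundary0 N z -> forall k : 'I_N.+1,
  \sum_i Vmx R N k i * inner_row z ord0 i = d1 z (k.+1)%:Z.
Proof.
move=> [zm1 [z0 [zN1 zN2]]] k; have := ltn_ord k; rewrite d1E.
under eq_bigr do rewrite !mxE mulrBl.
rewrite sumrB (sum_delta_shift N 0 k (fun i => z (i.+1)%:Z))
  (sum_delta_shift N 1 k (fun i => z (i.+1)%:Z)) => kN.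
have -> : (if (0 <= k < 0 + N)%N then z ((k - 0).+1)%:Z else 0) = z (k.+1)%:Z.
  case: ifP => h; first by rewrite subn0.
  by have -> : k = N :> nat by lia.
have -> : (if (1 <= k < 1 + N)%N then z ((k - 1).+1)%:Z else 0) = z k%:Z.
  case: ifP => h; first by congr (z _); lia.
  by have -> : k = 0 :> nat by lia.
by [].
Qed.


Lemma sum_d2_sq_le (z : int -> R) : boundary0 N z ->
  \sum_(k < N.+2) d2 z (k.+1)%:Z ^+ 2 <= 16 * \sum_(i < N) z (i.+1)%:Z ^+ 2.
Proof.
move=> [zm1 [z0 [zN1 zN2]]].
set S := \sum_(i < N) z (i.+1)%:Z ^+ 2.
have sum_next : \sum_(k < N.+2) z (k.+1)%:Z ^+ 2 = S.
  by rewrite /S !big_ord_recr /= zN1 zN2; ring.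
have sum_cur : \sum_(k < N.+2) z k%:Z ^+ 2 = S.
  by rewrite /S big_ord_recl big_ord_recr /= z0 zN1; ring.
have sum_prev : \sum_(k < N.+2) z (k%:Z - 1) ^+ 2 = S.
  rewrite 2!big_ord_recl /= sub0r zm1 subrr z0 expr0n !add0r.
  by apply: eq_bigr => i _; congr (z _ ^+ 2); rewrite /bump /=; lia.
apply: (@le_trans _ _ (\sum_(k < N.+2)
    4 * (z (k.+1)%:Z ^+ 2 + 2 * z k%:Z ^+ 2 + z (k%:Z - 1) ^+ 2))).
  apply: ler_sum => k _; rewrite d2E.
  set a := z (k.+1)%:Z; set b := z k%:Z; set c := z (k%:Z - 1).
  have := sqr_ge0 (a + 2 * b + c); have := sqr_ge0 (a - c); nra.
rewrite -mulr_sumr !big_split /= -mulr_sumr sum_next sum_cur sum_prev; lra.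
Qed.

Lemma sum_d1_sq_le (z : int -> R) : boundary0 N z ->
  \sum_(k < N.+1) d1 z (k.+1)%:Z ^+ 2 <= 4 * \sum_(i < N) z (i.+1)%:Z ^+ 2.
Proof.
move=> [_ [z0 [zN1 _]]].
set S := \sum_(i < N) z (i.+1)%:Z ^+ 2.
have sum_next : \sum_(k < N.+1) z (k.+1)%:Z ^+ 2 = S.
  by rewrite /S big_ord_recr /= zN1; ring.
have sum_cur : \sum_(k < N.+1) z k%:Z ^+ 2 = S.
  by rewrite /S big_ord_recl /= z0; ring.
apply: (@le_trans _ _ (\sum_(k < N.+1) 2 * (z (k.+1)%:Z ^+ 2 + z k%:Z ^+ 2))).
  apply: ler_sum => k _; rewrite d1E.
  by have := sqr_ge0 (z (k.+1)%:Z + z k%:Z); nra.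
rewrite -mulr_sumr big_split /= sum_next sum_cur; lra.
Qed.

Lemma pmin_le (p : int -> R) (i : 'I_N.+2) : pmin N p <= p (i.+1)%:Z.
Proof. exact: (bigmin_le _ i (fun i : 'I_N.+2 => p (i.+1)%:Z)). Qed.

Lemma qmax_ge (q : int -> R) (i : 'I_N.+1) : q (i.+1)%:Z <= qmax N q.
Proof. exact: (le_bigmax _ (fun i : 'I_N.+1 => q (i.+1)%:Z) i). Qed.

Variables (p q : int -> R) (lam1 lam2 : R).
Hypothesis lam1_min : smallest_eigenvalue ((Vmx R N)^T *m Vmx R N) lam1.
Hypothesis lam2_min : smallest_eigenvalue ((Wmx R N)^T *m Wmx R N) lam2.

Definition coercivity := etap N lam2 p * pmin N p - etaq N lam1 q * qmax N q.

Lemma energy_form_ge (z : int -> R) : boundary0 N z ->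
  coercivity * \sum_(i < N) z (i.+1)%:Z ^+ 2 <= energy_form N p q z z.
Proof.
move=> bz.
set S := \sum_(i < N) z (i.+1)%:Z ^+ 2.
set Sp := \sum_(k < N.+2) d2 z (k.+1)%:Z ^+ 2.
set Sq := \sum_(k < N.+1) d1 z (k.+1)%:Z ^+ 2.
have MtM_sym m n (M : 'M[R]_(m, n)) : (M^T *m M)^T = M^T *m M.
  by rewrite trmx_mul trmxK.
have p_part : pmin N p * Sp
    <= \sum_(i < N.+2) p (i.+1)%:Z * d2 z (i.+1)%:Z * d2 z (i.+1)%:Z.
  rewrite /Sp mulr_sumr; apply: ler_sum => i _.
  by have := pmin_le p i; have := sqr_ge0 (d2 z (i.+1)%:Z); nra.
have q_part : \sum_(i < N.+1) q (i.+1)%:Z * d1 z (i.+1)%:Z * d1 z (i.+1)%:Z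
    <= qmax N q * Sq.
  rewrite /Sq mulr_sumr; apply: ler_sum => i _.
  by have := qmax_ge q i; have := sqr_ge0 (d1 z (i.+1)%:Z); nra.
have p_bound : etap N lam2 p * pmin N p * S <= pmin N p * Sp.
  rewrite /etap; case: ifP => p0.
    have := rayleigh (MtM_sym _ _ (Wmx R N)) lam2_min (inner_row z).
    rewrite qform_mulmx_tr sqnorm_inner_row -/S.
    under eq_bigr do rewrite Wmx_inner_row //.
    by rewrite -/Sp; nra.
  have := sum_d2_sq_le bz; rewrite -/S -/Sp.
  by move/negbT: p0; rewrite -ltNge; nra.
have q_bound : qmax N q * Sq <= etaq N lam1 q * qmax N q * S.
  rewrite /etaq; case: ifP => q0.
    have := rayleigh (MtM_sym _ _ (Vmx R N)) lam1_min (inner_row z).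
    rewrite qform_mulmx_tr sqnorm_inner_row -/S.
    under eq_bigr do rewrite Vmx_inner_row //.
    by rewrite -/Sq; nra.
  have := sum_d1_sq_le bz; rewrite -/S -/Sq.
  by move/negbT: q0; rewrite -leNgt; nra.
rewrite /coercivity /energy_form; lra.
Qed.

End Coercivity.

Lemma int_itv_ord (N : nat) (k : int) : 1 <= k <= N%:Z -> exists i : 'I_N, k = (i.+1)%:Z.
Proof.
case: k => [n kN|n]; last by lia.
have nN : (n.-1 < N)%N by lia.
by exists (Ordinal nN) => /=; congr Posz; lia.
Qed.

Lemma ord_succ_itv (N : nat) (i : 'I_N) : 1 <= (i.+1)%:Z <= N%:Z.
Proof. by have := ltn_ord i; lia. Qed.

Lemma homo_mulB_ge0 (R : realType) (g : R -> R) a b :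
  {homo g : s t / s <= t} -> 0 <= (a - b) * (g a - g b).
Proof.
move=> g_mono; have [ab|ba] := leP a b; first by have := g_mono _ _ ab; nra.
by have := g_mono _ _ (ltW ba); nra.
Qed.

Section Uniqueness.
Variables (R : realType) (N : nat) (f : int -> R -> R) (p q : int -> R) (lam1 lam2 : R).
Hypothesis lam1_min : smallest_eigenvalue ((Vmx R N)^T *m Vmx R N) lam1.
Hypothesis lam2_min : smallest_eigenvalue ((Wmx R N)^T *m Wmx R N) lam2.
Hypothesis coercive : 0 < coercivity N p q lam1 lam2.
Hypothesis f_mono : forall k : int, 1 <= k <= N%:Z -> {homo f k : s t / s <= t}.

Lemma solution_unique (y z : int -> R) :
  is_solution N p q f y -> is_solution N p q f z ->
  forall k : int, -1 <= k <= (N.+2)%:Z -> z k = y k.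
Proof.
move=> [ysol [y1 [y2 [y3 y4]]]] [zsol [z1 [z2 [z3 z4]]]].
pose d j := y j - z j.
have bd : boundary0 N d by rewrite /boundary0 /d y1 y2 y3 y4 z1 z2 z3 z4 subrr.
have energy_le0 : energy_form N p q d d <= 0.
  rewrite -(bvp_op_energy p q d bd); apply: sumr_le0 => i _.
  have ik := ord_succ_itv i.
  have yk : bvp_op p q y (i.+1)%:Z = - f (i.+1)%:Z (y (i.+1)%:Z).
    by apply/eqP; rewrite -addr_eq0; apply/eqP; exact: ysol.
  have zk : bvp_op p q z (i.+1)%:Z = - f (i.+1)%:Z (z (i.+1)%:Z).
    by apply/eqP; rewrite -addr_eq0; apply/eqP; exact: zsol.
  have := homo_mulB_ge0 (y (i.+1)%:Z) (z (i.+1)%:Z) (f_mono ik).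
  by rewrite bvp_opB /d yk zk; nra.
have coercive_d := energy_form_ge p q lam1_min lam2_min bd.
set S := \sum_(i < N) d (i.+1)%:Z ^+ 2 in coercive_d.
have S0 : S = 0.
  apply/eqP; rewrite eq_le sumr_ge0 => [|i _]; last exact: sqr_ge0.
  by rewrite andbT -(pmulr_rle0 S coercive); exact: le_trans coercive_d energy_le0.
have d0 (i : 'I_N) : d (i.+1)%:Z = 0.
  have := @psumr_eq0P _ _ predT (fun i : 'I_N => d (i.+1)%:Z ^+ 2)
    (fun i _ => sqr_ge0 _) S0 i isT.
  by move/eqP; rewrite sqrf_eq0 => /eqP.
move=> k kb; have [kin|kout] := boolP (1 <= k <= N%:Z).
  by have [i ->] := int_itv_ord kin; have := d0 i; rewrite /d; lra.
have : k = -1 \/ k = 0 \/ k = (N.+1)%:Z \/ k = (N.+2)%:Z by move: kout kb; lia.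
by case=> [->|[->|[->|->]]]; rewrite ?y1 ?z1 ?y2 ?z2 ?y3 ?z3 ?y4 ?z4.
Qed.

End Uniqueness.

Section Primitive.
Variable R : realType.

Definition primitive (a : R) (g : R -> R) (x : R) : R :=
  (\int[@lebesgue_measure R]_(t in `[a, x]) g t)%R.

Lemma primitive_derive (a : R) (g : R -> R) (x : R) : continuous g -> a < x ->
  derivable (primitive a g) x 1 /\ (primitive a g)^`()%classic x = g x.
Proof.
move=> g_cont ax.
apply: (@continuous_FTC1_closed R g a x (x + 1)); rewrite ?ltrDl //.
  apply: continuous_compact_integrable; first exact: segment_compact.
  exact: continuous_subspaceT.
exact: g_cont.
Qed.

Lemma continuous_primitive (a : R) (g : R -> R) (x : R) : continuous g -> a < x ->
  {for x, continuous (primitive a g)}.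
Proof.
move=> g_cont ax; have [dF _] := primitive_derive g_cont ax.
by apply: differentiable_continuous; apply/derivable1_diffP.
Qed.

(* Mean value theorem, then monotonicity of g at the intermediate point. *)
Lemma primitive_incr_bounds (a : R) (g : R -> R) (s t : R) : continuous g ->
  {homo g : x y / x <= y} -> a < s -> a < t ->
  g s * (t - s) <= primitive a g t - primitive a g s <= g t * (t - s).
Proof.
move=> g_cont g_mono.
wlog st : s t / s <= t.
  move=> H sa ta; have [st|ts] := leP s t; first exact: H.
  by have /andP[] := H t s (ltW ts) ta sa; move=> h1 h2; apply/andP; split; lra.
move=> sa ta; move: st; rewrite le_eqVlt => /orP[/eqP <-|st].
  by rewrite !subrr !mulr0 lexx.
have dF x : x \in `]s, t[ -> is_derive x 1 (primitive a g) (g x).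
  rewrite in_itv /= => /andP[sx xt].
  have [dx <-] := primitive_derive g_cont (lt_trans sa sx).
  by rewrite derive1E; apply: derivableP.
have cF : {within `[s, t], continuous (primitive a g)}.
  apply: derivable_within_continuous => x; rewrite in_itv /= => /andP[sx xt].
  by have [] := primitive_derive g_cont (lt_le_trans sa sx).
have [c /[!in_itv] /= /andP[sc ct] ->] := MVT st dF cF.
have := g_mono _ _ (ltW sc); have := g_mono _ _ (ltW ct).
have : 0 < t - s by rewrite subr_gt0.
by move=> h1 h2 h3; apply/andP; split; nra.
Qed.

End Primitive.

(* Stated on lambda-abstractions so that [apply:] can use them on concrete
   goals, where continuousD/B/M fail to unify. *)
Section ContinuousFun.
Variables (R : realType) (T : topologicalType) (F G : T -> R).
Hypotheses (F_cont : continuous F) (G_cont : continuous G).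

Lemma continuous_funD : continuous (fun x => F x + G x).
Proof. by move=> x; apply: continuousD; [exact: F_cont | exact: G_cont]. Qed.

Lemma continuous_funB : continuous (fun x => F x - G x).
Proof. by move=> x; apply: continuousB; [exact: F_cont | exact: G_cont]. Qed.

Lemma continuous_funM : continuous (fun x => F x * G x).
Proof. by move=> x; apply: continuousM; [exact: F_cont | exact: G_cont]. Qed.

End ContinuousFun.

Section ContinuousAtRow.
Variables (R : realType) (n : nat) (x : 'rV[R]_n) (F G : 'rV[R]_n -> R).
Hypotheses (F_cont : {for x, continuous F}) (G_cont : {for x, continuous G}).

Lemma continuous_rowD : {for x, continuous (fun y => F y + G y)}.
Proof. exact: continuousD. Qed.

Lemma continuous_rowM : {for x, continuous (fun y => F y * G y)}.
Proof. exact: continuousM. Qed.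

End ContinuousAtRow.

Section ExtendRow.
Variables (R : realType) (N : nat).

Definition extend_row (u : 'rV[R]_N) (k : int) : R :=
  \sum_(i < N) (k == (i.+1)%:Z)%:R * u ord0 i.

Lemma extend_row_ord u (i : 'I_N) : extend_row u (i.+1)%:Z = u ord0 i.
Proof.
rewrite /extend_row (bigD1 i) //= eqxx mul1r big1 ?addr0 // => j /eqP ji.
have /negbTE -> : (i.+1)%:Z != (j.+1)%:Z.
  by apply/eqP => e; apply: ji; apply: val_inj => /=; lia.
by rewrite mul0r.
Qed.

Lemma extend_row_out u (k : int) : ~~ (1 <= k <= N%:Z) -> extend_row u k = 0.
Proof.
move=> kout; rewrite /extend_row big1 // => i _.
have /negbTE -> : k != (i.+1)%:Z.
  by apply/eqP => e; move: kout (ltn_ord i); rewrite e; lia.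
by rewrite mul0r.
Qed.

Lemma extend_row_boundary0 u : boundary0 N (extend_row u).
Proof. by rewrite /boundary0 !extend_row_out //; lia. Qed.

Lemma extend_rowDZ u w (t : R) k :
  extend_row (u + t *: w) k = extend_row u k + t * extend_row w k.
Proof.
rewrite /extend_row mulr_sumr -big_split /=.
by apply: eq_bigr => i _; rewrite !mxE; ring.
Qed.

Lemma extend_rowZ w (t : R) k : extend_row (t *: w) k = t * extend_row w k.
Proof.
rewrite -[t *: w]add0r extend_rowDZ /extend_row big1 ?add0r // => i _.
by rewrite mxE mulr0.
Qed.

Lemma continuous_extend_row k : continuous (fun u => extend_row u k).
Proof.
apply: (@continuous_big _ _ +%R 0 predT add_continuous) => i _ u.
exact: continuousM (@cst_continuous _ _ _ u) (@coord_continuous R 1 N ord0 i u).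
Qed.

Lemma continuous_energy_extend (p q : int -> R) :
  continuous (fun u => energy_form N p q (extend_row u) (extend_row u)).
Proof.
have ext_cont k := @continuous_extend_row k.
rewrite /energy_form /d1 /d2 /fdiff; apply: continuous_funB;
  apply: (@continuous_big _ _ +%R 0 predT add_continuous) => i _;
  (apply: continuous_funM; first apply: continuous_funM; first exact: cst_continuous);
  by repeat apply: continuous_funB; exact: ext_cont.
Qed.

Lemma norm_coord_le (v : 'rV[R]_N) (i : 'I_N) : `|v ord0 i| <= `|v|.
Proof.
rewrite [leRHS]/Num.norm /= mx_normrE.
exact: (le_bigmax _ (fun ij : 'I_1 * 'I_N => `|v ij.1 ij.2|) (ord0, i)).
Qed.

End ExtendRow.

Lemma norm_sqr_le_sqnorm (R : realType) n (v : 'rV[R]_n) : `|v| ^+ 2 <= sqnorm v.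
Proof.
have [->|v0] := eqVneq v 0; first by rewrite normr0 expr2 mul0r sqnorm_ge0.
have nz : mx_norm v != 0 by rewrite -[mx_norm v]/(`|v|) normr_eq0.
have [[i0 i] /= vi] := mx_norm_neq0 nz.
rewrite -[`|v|]/(mx_norm v) vi (ord1 i0) real_normK ?num_real //.
rewrite /sqnorm (bigD1 i) //= lerDl.
by apply: sumr_ge0 => j _; exact: sqr_ge0.
Qed.

Section Existence.
Variables (R : realType) (N : nat) (f : int -> R -> R) (p q : int -> R) (lam1 lam2 : R).
Hypothesis lam1_min : smallest_eigenvalue ((Vmx R N)^T *m Vmx R N) lam1.
Hypothesis lam2_min : smallest_eigenvalue ((Wmx R N)^T *m Wmx R N) lam2.
Hypothesis coercive : 0 < coercivity N p q lam1 lam2.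
Hypothesis f_cont : forall k : int, 1 <= k <= N%:Z -> continuous (f k).
Hypothesis f_mono : forall k : int, 1 <= k <= N%:Z -> {homo f k : s t / s <= t}.

Let c := coercivity N p q lam1 lam2.
Let g (i : 'I_N) := f (i.+1)%:Z.
Let g_cont i : continuous (g i) := f_cont (ord_succ_itv i).
Let g_mono i : {homo g i : s t / s <= t} := f_mono (ord_succ_itv i).

(* Beyond the radius rho the quadratic part c/2 |v|^2 of the energy beats
   the at most linear decrease C0 |v| of the nonlinear part. *)
Let C0 := \sum_i `|g i 0|.
Let rho := 2 * C0 / c + 1.
(* The primitives start at -K, below every coordinate of the ball: the
   integral over [a, x] vanishes for x < a, so it is a primitive only to the
   right of a. *)
Let K := rho + 1.
Let G i := primitive (- K) (g i).

Let J (v : 'rV[R]_N) :=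
  energy_form N p q (extend_row v) (extend_row v) / 2 + \sum_i G i (v ord0 i).

Let B := [set v : 'rV[R]_N | `|v| <= rho].

Lemma rho_gt0 : 0 < rho.
Proof. by rewrite /rho ltr_pwDr // divr_ge0 ?mulr_ge0 ?sumr_ge0 // ltW. Qed.

Lemma coord_gtK (v : 'rV[R]_N) i : `|v| <= rho -> - K < v ord0 i.
Proof.
move=> vB; have := norm_coord_le v i; rewrite /K => vi.
have : `|v ord0 i| <= rho by exact: le_trans vi vB.
by rewrite ler_norml => /andP[h _]; lra.
Qed.

Lemma continuous_J : {within B, continuous J}.
Proof.
apply: continuous_in_subspaceT => v /[1!inE] vB.
apply: continuous_rowD.
  by apply: continuous_rowM; [exact: continuous_energy_extend | exact: cst_continuous].
apply: (@cvg_big _ _ +%R 0 predT add_continuous) => [|i _]; first exact: nbhs_filter.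
apply: (@continuous_comp _ _ _ (fun x : 'rV[R]_N => x ord0 i) (G i)).
  exact: coord_continuous.
exact: continuous_primitive (@g_cont i) (coord_gtK i vB).
Qed.

Lemma J0E : J 0 = \sum_i G i 0.
Proof.
rewrite /J; have -> : extend_row (0 : 'rV[R]_N) = (fun k => 0 * extend_row (0 : 'rV[R]_N) k).
  by apply: funext => k; rewrite -extend_rowZ scale0r.
rewrite energy_formZr !mul0r add0r.
by apply: eq_bigr => i _; rewrite mxE.
Qed.

Lemma J_growth (v : 'rV[R]_N) : B v -> c / 2 * `|v| ^+ 2 - C0 * `|v| <= J v - J 0.
Proof.
move=> vB.
have E_ge := energy_form_ge p q lam1_min lam2_min (extend_row_boundary0 v).
have sum_ext : \sum_(i < N) extend_row v (i.+1)%:Z ^+ 2 = sqnorm v.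
  by apply: eq_bigr => i _; rewrite extend_row_ord.
rewrite sum_ext in E_ge.
have G_ge : - C0 * `|v| <= \sum_i (G i (v ord0 i) - G i 0).
  rewrite /C0 mulNr mulr_suml -sumrN; apply: ler_sum => i _.
  have K0 : - K < 0 by rewrite /K; have := rho_gt0; lra.
  have /andP[Gi _] := primitive_incr_bounds (@g_cont i) (@g_mono i) K0 (coord_gtK i vB).
  have := norm_coord_le v i; have := normr_ge0 (g i 0).
  have := ler_norm (- (g i 0 * v ord0 i)); rewrite normrN normrM subr0 in Gi *.
  rewrite /G; nra.
have := norm_sqr_le_sqnorm v; have := ltW coercive.
rewrite J0E /J sumrB -/c in G_ge E_ge *; nra.
Qed.

Lemma exists_interior_minimizer :
  exists2 u, `|u| < rho & forall v, B v -> J u <= J v.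
Proof.
have B0 : B !=set0 by exists 0; rewrite /B /= normr0 ltW ?rho_gt0.
have Bc : compact B.
  apply: bounded_closed_compact.
    by exists rho; split; [exact: num_real | move=> M rhoM v; rewrite /B /= => vB; lra].
  exact: (preimage_closed (fun x _ => @norm_continuous _ _ x) (@closed_le _ rho)).
have [u /[1!inE] uB u_min] := EVT_min_rV B0 Bc continuous_J.
exists u; last by move=> v vB; apply: u_min; rewrite inE.
rewrite lt_neqAle uB andbT; apply/eqP => u_rho.
have Ju0 : J u <= J 0 by apply: u_min; rewrite inE /B /= normr0 ltW ?rho_gt0.
have := J_growth uB; rewrite u_rho.
have : c * rho = 2 * C0 + c by rewrite /rho; field; rewrite gt_eqF.
have : 0 < rho * c := mulr_gt0 rho_gt0 coercive.
nra.
Qed.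

Section EulerLagrange.
Variable u : 'rV[R]_N.
Hypotheses (u_int : `|u| < rho) (u_min : forall v, B v -> J u <= J v).

Lemma euler_lagrange_ge (w : 'rV[R]_N) :
  0 <= energy_form N p q (extend_row u) (extend_row w) + \sum_i g i (u ord0 i) * w ord0 i.
Proof.
set y := extend_row u; set z := extend_row w.
pose phi t := energy_form N p q y z + t / 2 * energy_form N p q z z
              + \sum_i g i (u ord0 i + t * w ord0 i) * w ord0 i.
have -> : energy_form N p q y z + \sum_i g i (u ord0 i) * w ord0 i = phi 0.
  rewrite /phi mul0r mul0r addr0; congr (_ + _).
  by apply: eq_bigr => i _; rewrite mul0r addr0.
pose t0 := (rho - `|u|) / (`|w| + 1).
have w1 : 0 < `|w| + 1 by have := normr_ge0 w; lra.
have phi_ge0 t : 0 < t -> t < t0 -> 0 <= phi t.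
  move=> t_gt0 t_lt.
  have uwB : B (u + t *: w).
    rewrite /B /=; apply: le_trans (ler_normD _ _) _; rewrite normrZ gtr0_norm //.
    have : t * (`|w| + 1) < rho - `|u| by rewrite -ltr_pdivlMr.
    by have := normr_ge0 w; nra.
  have ext_uw : extend_row (u + t *: w) = (fun k => y k + t * z k).
    by apply: funext => k; rewrite extend_rowDZ.
  have G_le : \sum_i G i ((u + t *: w) ord0 i) - \sum_i G i (u ord0 i)
              <= t * \sum_i g i (u ord0 i + t * w ord0 i) * w ord0 i.
    rewrite -sumrB mulr_sumr; apply: ler_sum => i _.
    have := primitive_incr_bounds (@g_cont i) (@g_mono i)
      (coord_gtK i (ltW u_int)) (coord_gtK i uwB).
    rewrite !mxE addrAC subrr add0r => /andP[_ Gi].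
    by rewrite /G mulrCA; exact: Gi.
  have := u_min uwB; rewrite /J ext_uw energy_formDZ -/y => J_le.
  have : 0 <= t * phi t by rewrite /phi; nra.
  by rewrite pmulr_rge0.
have phi_cont : continuous phi.
  apply: continuous_funD; first apply: continuous_funD.
  - exact: cst_continuous.
  - apply: continuous_funM; last exact: cst_continuous.
    by apply: continuous_funM; [move=> ?; exact: cvg_id | exact: cst_continuous].
  apply: (@continuous_big _ _ +%R 0 predT add_continuous) => i _.
  apply: continuous_funM; last exact: cst_continuous.
  have affine_cont : continuous (fun t : R => u ord0 i + t * w ord0 i).
    apply: continuous_funD; first exact: cst_continuous.
    by apply: continuous_funM; [move=> ?; exact: cvg_id | exact: cst_continuous].
  by move=> t; exact: continuous_comp (affine_cont t) (@g_cont i _).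
have t0_gt0 : 0 < t0 by rewrite divr_gt0 // subr_gt0.
apply: cvgr_to_ge (cvg_at_right_filter (phi_cont 0)) _.
near=> t; apply: phi_ge0; near: t; [exact: nbhs_right_gt | exact: nbhs_right_lt].
Unshelve. all: by end_near.
Qed.

Lemma euler_lagrange (w : 'rV[R]_N) :
  energy_form N p q (extend_row u) (extend_row w) + \sum_i g i (u ord0 i) * w ord0 i = 0.
Proof.
apply/eqP; rewrite eq_le euler_lagrange_ge andbT.
have := euler_lagrange_ge ((-1) *: w).
have -> : extend_row ((-1) *: w) = (fun k => -1 * extend_row w k).
  by apply: funext => k; rewrite extend_rowZ.
rewrite energy_formZr.
under eq_bigr do rewrite mxE mulrCA.
by rewrite -mulr_sumr -mulrDr mulN1r oppr_ge0.
Qed.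

Lemma minimizer_solves : is_solution N p q f (extend_row u).
Proof.
split; last exact: extend_row_boundary0.
move=> k /int_itv_ord [j ->].
have := euler_lagrange (delta_mx 0 j).
rewrite -(bvp_op_energy p q _ (extend_row_boundary0 _)) -big_split /=.
rewrite (bigD1 j) //= big1 ?addr0 => [|i ij]; last first.
  by rewrite extend_row_ord !mxE eqxx /= (negbTE ij) mul0r mulr0 addr0.
by rewrite extend_row_ord !mxE !eqxx mul1r mulr1 -(extend_row_ord u j).
Qed.

End EulerLagrange.

Lemma solution_exists : exists y, is_solution N p q f y.
Proof.
have [u u_int u_min] := exists_interior_minimizer.
by exists (extend_row u); exact: minimizer_solves.
Qed.

End Existence.


Theorem theorem4 (R : realType) (N : nat) (f : int -> R -> R) (p q : int -> R)
    (lam1 lam2 : R) :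
  (0 < N)%N ->
  smallest_eigenvalue ((Vmx R N)^T *m Vmx R N) lam1 ->
  smallest_eigenvalue ((Wmx R N)^T *m Wmx R N) lam2 ->
  (forall k : int, 1 <= k <= N%:Z -> continuous (f k)) ->
  (exists m : R, 0 < m /\
     forall (k : int) (s : R), 1 <= k <= N%:Z -> m <= `|s| -> 0 <= s * f k s) ->
  etap N lam2 p * pmin N p - etaq N lam1 q * qmax N q > 0 ->
  (forall k : int, 1 <= k <= N%:Z -> forall s t : R, s <= t -> f k s <= f k t) ->
  pmin N p * etap N lam2 p > qmax N q * etaq N lam1 q ->
  exists y : int -> R, is_solution N p q f y /\
    forall z : int -> R, is_solution N p q f z ->
      forall k : int, -1 <= k <= (N.+2)%:Z -> z k = y k.
Proof.
move=> _ lam1_min lam2_min f_cont _ coercive f_mono _.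
have [y ysol] := solution_exists lam1_min lam2_min coercive f_cont f_mono.
exists y; split; first exact: ysol.
move=> z zsol; exact: (solution_unique lam1_min lam2_min coercive f_mono ysol zsol).
Qed.
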